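(* If a central extension $0\to(M,\alpha_M)\to(K,\alpha_K)\xrightarrow{\pi}(L,\alpha_L)\to0$ of Hom-Leibniz $n$-algebras is a universal $\alpha$-central extension, then $(K,\alpha_K)$ is perfect and every central extension $\rho:(F,\alpha_F)\to(K,\alpha_K)$ of $(K,\alpha_K)$ splits (there is a homomorphism $\sigma:K\to F$ with $\rho\circ\sigma=\mathrm{id}_K$).
   Context: Fix a field $\mathbb K$ and $n\ge2$. A (multiplicative) Hom-Leibniz $n$-algebra is a $\mathbb K$-vector space $L$ with an $n$-linear bracket and a linear map $\alpha_L$ preserving the bracket, satisfying $[[x_1,\dots,x_n],\alpha_L(y_1),\dots,\alpha_L(y_{n-1})]=\sum_{i=1}^n[\alpha_L(x_1),\dots,[x_i,y_1,\dots,y_{n-1}],\dots,\alpha_L(x_n)]$. Homomorphisms preserve brackets and commute with twisting maps. Perfect: $K=[K,\dots,K]$. Center $Z(K)$: elements $x$ such that every bracket with $x$ in some position equals $0$. An extension of $L$ is a surjective homomorphism $\pi:K\to L$ with kernel $M$; central if $M\subseteq Z(K)$; $\alpha$-central if every bracket with $n-1$ entries in $\alpha_K(M)$ and the remaining entry (any position) in $K$ vanishes. A central extension $\pi$ is universal $\alpha$-central if for every $\alpha$-central extension $\pi':K'\to L$ there is a unique homomorphism $h:K\to K'$ with $\pi'\circ h=\pi$. *)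

From HB Require Import structures.
From mathcomp Require Import all_boot all_order all_algebra.
Set Implicit Arguments. Unset Strict Implicit. Unset Printing Implicit Defensive.
Import GRing.Theory.
Local Open Scope ring_scope.

Definition set_at (T : Type) (n : nat) (x : 'I_n -> T) (i : 'I_n) (v : T)
  : 'I_n -> T := fun j => if j == i then v else x j.

Definition cons_at (T : Type) (n : nat) (a : T) (y : nat -> T) : 'I_n -> T :=
  fun j => if nat_of_ord j is k.+1 then y k else a.

Record hleib (R : fieldType) (n : nat) := HLeib {
  hl_car :> lmodType R;
  hl_br : ('I_n -> hl_car) -> hl_car;
  hl_alpha : hl_car -> hl_car;
  hl_br_multilinear : forall (x : 'I_n -> hl_car) (i : 'I_n) (a : R) (u v : hl_car),
      hl_br (set_at x i (a *: u + v)) = a *: hl_br (set_at x i u) + hl_br (set_at x i v);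
  hl_alpha_linear : forall (a : R) (u v : hl_car),
      hl_alpha (a *: u + v) = a *: hl_alpha u + hl_alpha v;
  hl_alpha_br : forall x : 'I_n -> hl_car, hl_alpha (hl_br x) = hl_br (hl_alpha \o x);
  hl_identity : forall (x : 'I_n -> hl_car) (y : nat -> hl_car),
      hl_br (cons_at (hl_br x) (hl_alpha \o y))
      = \sum_(i < n) hl_br (set_at (hl_alpha \o x) i (hl_br (cons_at (x i) y)))
}.

Arguments hl_br {R n} _ _.
Arguments hl_alpha {R n} _ _.

Definition is_hom (R : fieldType) (n : nat) (A B : hleib R n) (f : A -> B) : Prop :=
  [/\ forall (a : R) (u v : A), f (a *: u + v) = a *: f u + f v,
      forall x : 'I_n -> A, f (hl_br A x) = hl_br B (f \o x) &
      forall u : A, f (hl_alpha A u) = hl_alpha B (f u)].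

Definition in_center (R : fieldType) (n : nat) (A : hleib R n) (z : A) : Prop :=
  forall (x : 'I_n -> A) (i : 'I_n), hl_br A (set_at x i z) = 0.

Definition perfect (R : fieldType) (n : nat) (A : hleib R n) : Prop :=
  forall z : A, exists s : seq (R * ('I_n -> A)),
    z = \sum_(p <- s) p.1 *: hl_br A p.2.

Definition is_extension (R : fieldType) (n : nat) (A B : hleib R n) (p : A -> B) : Prop :=
  is_hom p /\ forall b : B, exists a : A, p a = b.

Definition is_central_ext (R : fieldType) (n : nat) (A B : hleib R n) (p : A -> B) : Prop :=
  is_extension p /\ forall m : A, p m = 0 -> in_center m.

Definition is_alpha_central_ext (R : fieldType) (n : nat) (A B : hleib R n) (p : A -> B)
  : Prop :=
  is_extension p /\
  forall (x : 'I_n -> A) (i : 'I_n),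
    (forall j : 'I_n, j != i -> exists m : A, p m = 0 /\ x j = hl_alpha A m) ->
    hl_br A x = 0.

Definition is_universal_alpha_central (R : fieldType) (n : nat) (A B : hleib R n)
  (p : A -> B) : Prop :=
  is_central_ext p /\
  forall (A' : hleib R n) (p' : A' -> B), is_alpha_central_ext p' ->
    (exists h : A -> A', is_hom h /\ forall a, p' (h a) = p a) /\
    (forall h1 h2 : A -> A', is_hom h1 -> is_hom h2 ->
       (forall a, p' (h1 a) = p a) -> (forall a, p' (h2 a) = p a) ->
       forall a, h1 a = h2 a).

From Stdlib Require Import ClassicalEpsilon FunctionalExtensionality PropExtensionality.
From HB Require Import structures.
From mathcomp Require Import all_boot all_order all_algebra.
Set Implicit Arguments. Unset Strict Implicit. Unset Printing Implicit Defensive.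
Import GRing.Theory.
Local Open Scope ring_scope.

(* Perfectness: the abelianization K/[K,...,K], with zero bracket and induced
   twist, gives an alpha-central extension L x K/[K,...,K] -> L. The two lifts
   k |-> (pi k, 0) and k |-> (pi k, [k]) of pi must coincide, so every class [k]
   vanishes.
   Splitting: if rho : F -> K is central and K is perfect, then pi o rho is
   alpha-central. Indeed F = [F,...,F] + ker rho with ker rho central, and the
   Hom-Leibniz identity shows that a bracket with n-1 entries in
   alpha_F(ker (pi o rho)) and the remaining one in [F,...,F] vanishes. Universality gives
   sigma : K -> F over L, and rho o sigma = id_K by uniqueness of lifts of pi. *)

Section SetAt.
Variables (n : nat) (T U : Type).
Implicit Types (x : 'I_n -> T) (i : 'I_n).

Lemma set_at_id x i : set_at x i (x i) = x.
Proof. by apply: functional_extensionality => j; rewrite /set_at; case: eqP => // ->. Qed.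

Lemma set_at_eq x i u : set_at x i u i = u.
Proof. by rewrite /set_at eqxx. Qed.

Lemma set_at_neq x i j u : j != i -> set_at x i u j = x j.
Proof. by rewrite /set_at => /negbTE ->. Qed.

Lemma set_at_set_at x i u v : set_at (set_at x i u) i v = set_at x i v.
Proof. by apply: functional_extensionality => j; rewrite /set_at; case: eqP. Qed.

Lemma comp_set_at (g : T -> U) x i u : g \o set_at x i u = set_at (g \o x) i (g u).
Proof. by apply: functional_extensionality => j; rewrite /set_at /=; case: eqP. Qed.

Lemma comp_cons_at (g : T -> U) (a : T) (y : nat -> T) :
  g \o cons_at (n := n) a y = cons_at (g a) (g \o y).
Proof. by apply: functional_extensionality => -[[|k] ?]. Qed.

End SetAt.

Section Bracket.
Variables (R : fieldType) (n : nat) (A : hleib R n).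
Implicit Types (x : 'I_n -> A) (i : 'I_n).

Lemma br_setD x i u v :
  hl_br A (set_at x i (u + v)) = hl_br A (set_at x i u) + hl_br A (set_at x i v).
Proof. by have := hl_br_multilinear x i 1 u v; rewrite !scale1r. Qed.

Lemma br_set0 x i : hl_br A (set_at x i 0) = 0.
Proof.
have := br_setD x i 0 0; rewrite addr0 => dbl.
by apply: (addrI (hl_br A (set_at x i 0))); rewrite -dbl addr0.
Qed.

Lemma br_setZ x i a u : hl_br A (set_at x i (a *: u)) = a *: hl_br A (set_at x i u).
Proof. by have := hl_br_multilinear x i a u 0; rewrite !addr0 br_set0 addr0. Qed.

Lemma br_eq0_at x i : x i = 0 -> hl_br A x = 0.
Proof. by move=> xi0; rewrite -(set_at_id x i) xi0 br_set0. Qed.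

Lemma br_center_at x i : in_center (x i) -> hl_br A x = 0.
Proof. by move=> xiZ; rewrite -(set_at_id x i) xiZ. Qed.

Lemma alpha0 : hl_alpha A 0 = 0.
Proof.
have := @hl_alpha_linear _ _ A 1 0 0; rewrite !scale1r addr0 => dbl.
by apply: (addrI (hl_alpha A 0)); rewrite -dbl addr0.
Qed.

Lemma alpha_hom : is_hom (hl_alpha A).
Proof. by split; [exact: hl_alpha_linear | exact: hl_alpha_br |]. Qed.

End Bracket.

Section Hom.
Variables (R : fieldType) (n : nat) (A B : hleib R n) (f : A -> B).
Hypothesis f_hom : is_hom f.

Lemma hom0 : f 0 = 0.
Proof.
case: f_hom => f_lin _ _; have := f_lin 1 0 0; rewrite !scale1r addr0 => dbl.
by apply: (addrI (f 0)); rewrite -dbl addr0.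
Qed.

Lemma homD u v : f (u + v) = f u + f v.
Proof. by case: f_hom => f_lin _ _; have := f_lin 1 u v; rewrite !scale1r. Qed.

Lemma homZ a u : f (a *: u) = a *: f u.
Proof. by case: f_hom => f_lin _ _; have := f_lin a u 0; rewrite !addr0 hom0 addr0. Qed.

Lemma homB u v : f (u - v) = f u - f v.
Proof. by rewrite homD -scaleN1r homZ scaleN1r. Qed.

Lemma hom_sum (I : Type) (s : seq (R * I)) (b : I -> A) :
  f (\sum_(p <- s) p.1 *: b p.2) = \sum_(p <- s) p.1 *: f (b p.2).
Proof.
elim: s => [|p s IH]; first by rewrite !big_nil hom0.
by rewrite !big_cons homD homZ IH.
Qed.

Lemma hom_comp (C : hleib R n) (g : B -> C) : is_hom g -> is_hom (g \o f).
Proof.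
case: f_hom => fl fb fa [gl gb ga].
by split=> [a u v|x|u] /=; rewrite ?fl ?gl ?fb ?gb ?fa ?ga.
Qed.

End Hom.

Lemma hom_id (R : fieldType) (n : nat) (A : hleib R n) : is_hom (fun a : A => a).
Proof. by split. Qed.

Lemma hom_zero (R : fieldType) (n : nat) (A B : hleib R n) :
  (0 < n)%N -> is_hom (fun _ : A => 0 : B).
Proof.
move=> n_gt0; split=> [a u v|x|u]; rewrite ?scaler0 ?addr0 ?alpha0 //.
by rewrite (@br_eq0_at _ _ B _ (Ordinal n_gt0)).
Qed.

Section Derived.
Variables (R : fieldType) (n : nat) (A : hleib R n).

Definition derived (z : A) : Prop :=
  exists s : seq (R * ('I_n -> A)), z = \sum_(p <- s) p.1 *: hl_br A p.2.

Lemma derived0 : derived 0.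
Proof. by exists [::]; rewrite big_nil. Qed.

Lemma derivedD u v : derived u -> derived v -> derived (u + v).
Proof. by case=> s -> [t ->]; exists (s ++ t); rewrite big_cat. Qed.

Lemma derivedZ a u : derived u -> derived (a *: u).
Proof.
case=> s ->; exists [seq (a * p.1, p.2) | p <- s].
by rewrite big_map scaler_sumr; apply: eq_bigr => p _; rewrite scalerA.
Qed.

Lemma derivedN u : derived u -> derived (- u).
Proof. by rewrite -scaleN1r; exact: derivedZ. Qed.

Lemma derivedB u v : derived u -> derived v -> derived (u - v).
Proof. by move=> du dv; apply/derivedD/derivedN. Qed.

Lemma derived_br x : derived (hl_br A x).
Proof. by exists [:: (1, x)]; rewrite big_seq1 scale1r. Qed.

Lemma br_set_derived (x : 'I_n -> A) i t :
  (forall y, hl_br A (set_at x i (hl_br A y)) = 0) -> derived t ->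
  hl_br A (set_at x i t) = 0.
Proof.
move=> br0 [s ->]; elim: s => [|p s IH]; first by rewrite big_nil br_set0.
by rewrite big_cons br_setD br_setZ br0 IH scaler0 add0r.
Qed.

End Derived.

Lemma derived_hom (R : fieldType) (n : nat) (A B : hleib R n) (f : A -> B) u :
  is_hom f -> derived u -> derived (f u).
Proof.
move=> f_hom [s ->]; rewrite (hom_sum f_hom); exists [seq (p.1, f \o p.2) | p <- s].
by rewrite big_map; apply: eq_bigr => p _; case: f_hom => _ -> _.
Qed.

Section TrivialBracket.
Variables (R : fieldType) (n : nat) (V : lmodType R) (a : V -> V).
Hypothesis a_linear : forall c u v, a (c *: u + v) = c *: a u + a v.

Lemma linear_fun0 : a 0 = 0.
Proof.
have := a_linear 1 0 0; rewrite !scale1r addr0 => dbl.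
by apply: (addrI (a 0)); rewrite -dbl addr0.
Qed.

Definition trivial_hleib : hleib R n.
Proof.
refine (@HLeib R n V (fun _ => 0) a _ a_linear _ _).
- by move=> x i c u v; rewrite scaler0 addr0.
- by move=> x; rewrite linear_fun0.
- by move=> x y; rewrite big1.
Defined.

End TrivialBracket.

Section Product.
Variables (R : fieldType) (n : nat) (A B : hleib R n).

Lemma pair_ext (u v : (A * B)%type) : u.1 = v.1 -> u.2 = v.2 -> u = v.
Proof. by case: u v => ? ? [? ?] /= -> ->. Qed.

Definition prod_hleib : hleib R n.
Proof.
refine (@HLeib R n ((A * B)%type : lmodType R)
  (fun x => (hl_br A (fst \o x), hl_br B (snd \o x)))
  (fun u => (hl_alpha A u.1, hl_alpha B u.2)) _ _ _ _).
- by move=> x i c u v; apply: pair_ext; rewrite /= !comp_set_at hl_br_multilinear.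
- by move=> c u v; apply: pair_ext; rewrite /= hl_alpha_linear.
- by move=> x; apply: pair_ext; rewrite /= hl_alpha_br.
- move=> x y; apply: pair_ext.
    rewrite (big_morph fst (id1 := 0) (op1 := +%R)) //= comp_cons_at hl_identity.
    by apply: eq_bigr => i _; rewrite comp_set_at !comp_cons_at.
  rewrite (big_morph snd (id1 := 0) (op1 := +%R)) //= comp_cons_at hl_identity.
  by apply: eq_bigr => i _; rewrite comp_set_at !comp_cons_at.
Defined.

Lemma hom_pair (C : hleib R n) (f : C -> A) (g : C -> B) :
  is_hom f -> is_hom g -> is_hom (fun c => (f c, g c) : prod_hleib).
Proof.
case=> fl fb fa [gl gb ga].
by split=> [a u v|x|u]; apply: pair_ext; rewrite /= ?fl ?gl ?fb ?gb ?fa ?ga.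
Qed.

Lemma fst_central_ext : (forall y, hl_br B y = 0) ->
  is_central_ext (fst : prod_hleib -> A).
Proof.
move=> B_abelian; split; first by split; [split | move=> a; exists (a, 0)].
move=> m m1_0 x i; apply: pair_ext; last exact: B_abelian.
by rewrite /= comp_set_at m1_0 br_set0.
Qed.

End Product.

Section Abelianization.
Variables (R : fieldType) (n : nat) (K : hleib R n).

(* The quotient K / [K,...,K] is realised as the type of chosen coset representatives. *)
Definition derived_rep (z : K) : K :=
  epsilon (inhabits 0) (fun y => derived (y - z)).

Lemma derived_rep_spec z : derived (derived_rep z - z).
Proof.
apply: (epsilon_spec (inhabits 0) (fun y => derived (y - z))).
by exists z; rewrite subrr; exact: derived0.
Qed.

Lemma derived_rep_eq a b : derived (a - b) -> derived_rep a = derived_rep b.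
Proof.
move=> dab; rewrite /derived_rep; congr (epsilon _); apply: functional_extensionality => y.
apply: propositional_extensionality; split => dy.
  by have := derivedD dy dab; rewrite addrA subrK.
by have := derivedB dy dab; rewrite opprB addrA subrK.
Qed.

Lemma derived_repK z : derived_rep (derived_rep z) = derived_rep z.
Proof. exact/derived_rep_eq/derived_rep_spec. Qed.

Definition abelianization := {z : K | derived_rep z == z}.
HB.instance Definition _ := Choice.on abelianization.

Definition ab_proj (z : K) : abelianization :=
  exist _ (derived_rep z) (introT eqP (derived_repK z)).

Lemma ab_proj_eq a b : derived (a - b) -> ab_proj a = ab_proj b.
Proof. by move=> dab; apply: val_inj; rewrite /= (derived_rep_eq dab). Qed.

Lemma ab_projK (q : abelianization) : ab_proj (val q) = q.
Proof. by apply: val_inj => /=; apply/eqP; case: q. Qed.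

Lemma ab_proj_spec z : derived (val (ab_proj z) - z).
Proof. exact: derived_rep_spec. Qed.

Definition ab_add (q1 q2 : abelianization) := ab_proj (val q1 + val q2).
Definition ab_opp (q : abelianization) := ab_proj (- val q).
Definition ab_scale (a : R) (q : abelianization) := ab_proj (a *: val q).

Lemma ab_addE x y : ab_add (ab_proj x) (ab_proj y) = ab_proj (x + y).
Proof. by apply: ab_proj_eq; rewrite opprD addrACA; apply: derivedD; exact: ab_proj_spec. Qed.

Lemma ab_oppE x : ab_opp (ab_proj x) = ab_proj (- x).
Proof. by apply: ab_proj_eq; rewrite -opprD; apply: derivedN; exact: ab_proj_spec. Qed.

Lemma ab_scaleE a x : ab_scale a (ab_proj x) = ab_proj (a *: x).
Proof. by apply: ab_proj_eq; rewrite -scalerBr; apply: derivedZ; exact: ab_proj_spec. Qed.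

Lemma ab_addA : associative ab_add.
Proof. by move=> a b c; rewrite -(ab_projK a) -(ab_projK b) -(ab_projK c) !ab_addE addrA. Qed.

Lemma ab_addC : commutative ab_add.
Proof. by move=> a b; rewrite -(ab_projK a) -(ab_projK b) !ab_addE addrC. Qed.

Lemma ab_add0 : left_id (ab_proj 0) ab_add.
Proof. by move=> a; rewrite -(ab_projK a) ab_addE add0r. Qed.

Lemma ab_addN : left_inverse (ab_proj 0) ab_opp ab_add.
Proof. by move=> a; rewrite -(ab_projK a) ab_oppE ab_addE addNr. Qed.

HB.instance Definition _ :=
  GRing.isZmodule.Build abelianization ab_addA ab_addC ab_add0 ab_addN.

Lemma ab_scaleA a b q : ab_scale a (ab_scale b q) = ab_scale (a * b) q.
Proof. by rewrite -(ab_projK q) !ab_scaleE scalerA. Qed.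

Lemma ab_scale1 : left_id 1 ab_scale.
Proof. by move=> q; rewrite -(ab_projK q) ab_scaleE scale1r. Qed.

Lemma ab_scaleDr : right_distributive ab_scale +%R.
Proof.
move=> a u v; rewrite -(ab_projK u) -(ab_projK v) /+%R /= ab_addE !ab_scaleE.
by rewrite ab_addE scalerDr.
Qed.

Lemma ab_scaleDl q : {morph ab_scale^~ q : a b / a + b}.
Proof. by move=> a b; rewrite -(ab_projK q) /+%R /= !ab_scaleE ab_addE scalerDl. Qed.

HB.instance Definition _ :=
  GRing.Zmodule_isLmodule.Build R abelianization ab_scaleA ab_scale1 ab_scaleDr ab_scaleDl.

Lemma ab_proj_linear a u v : ab_proj (a *: u + v) = a *: ab_proj u + ab_proj v.
Proof.
by change (ab_proj (a *: u + v) = ab_add (ab_scale a (ab_proj u)) (ab_proj v));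
  rewrite ab_scaleE ab_addE.
Qed.

Lemma ab_proj_eq0 z : ab_proj z = 0 -> derived z.
Proof.
move=> z0; have := ab_proj_spec z; rewrite z0 => dz.
have := derivedB (ab_proj_spec 0) dz; by rewrite subr0 opprB addrC subrK.
Qed.

Definition ab_alpha (q : abelianization) := ab_proj (hl_alpha K (val q)).

Lemma ab_alphaE z : ab_alpha (ab_proj z) = ab_proj (hl_alpha K z).
Proof.
apply: ab_proj_eq; rewrite -(homB (alpha_hom K)).
by apply: (derived_hom (alpha_hom K)); exact: ab_proj_spec.
Qed.

Lemma ab_alpha_linear a u v : ab_alpha (a *: u + v) = a *: ab_alpha u + ab_alpha v.
Proof.
rewrite -(ab_projK u) -(ab_projK v) -ab_proj_linear !ab_alphaE.
by rewrite hl_alpha_linear ab_proj_linear.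
Qed.

Definition abelianization_hleib : hleib R n := trivial_hleib n ab_alpha_linear.

Lemma ab_proj_hom : is_hom (ab_proj : K -> abelianization_hleib).
Proof.
split=> [a u v|x|u]; first exact: ab_proj_linear; last by rewrite /= ab_alphaE.
by apply/ab_proj_eq; rewrite subr0; exact: derived_br.
Qed.

End Abelianization.

Section AlphaCentral.
Variables (R : fieldType) (n : nat).

(* Expand [[X], alpha Y] with X := m except X_i := y_0, and Y := (y_1, y_2, ...) by the
   Hom-Leibniz identity: the left side and every summand but the i-th contain a
   bracket whose rho-image has a central entry, hence a bracket in the central ker rho. *)
Lemma br_alpha_kernel_br (F K : hleib R n) (rho : F -> K) (m y : 'I_n -> F) (i j : 'I_n) :
  is_hom rho -> (forall f, rho f = 0 -> in_center f) -> j != i ->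
  (forall k, k != i -> in_center (rho (m k))) ->
  hl_br F (set_at (hl_alpha F \o m) i (hl_br F y)) = 0.
Proof.
move=> [_ rho_br _] rhoZ ji mZ.
have br_central z k : in_center (rho (z k)) -> in_center (hl_br F z).
  by move=> zkZ; apply: rhoZ; rewrite rho_br (br_center_at (i := k)).
pose o0 : 'I_n := Ordinal (leq_ltn_trans (leq0n j) (ltn_ord j)).
pose X := set_at m i (y o0).
pose Y (k : nat) : F := y (insubd o0 k.+1).
have yE : cons_at (y o0) Y = y.
  apply: functional_extensionality => -[[|k] Hk] /=; congr y; apply: val_inj => //.
  by rewrite /= val_insubd Hk.
have XZ : in_center (hl_br F X) by apply: (br_central _ j); rewrite /X set_at_neq //; exact: mZ.
have termZ k : k != i ->
    hl_br F (set_at (hl_alpha F \o X) k (hl_br F (cons_at (X k) Y))) = 0.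
  by move=> ki; apply: (br_central _ o0); rewrite /= /X set_at_neq //; exact: mZ.
have := hl_identity X Y.
rewrite (@br_center_at _ _ F (cons_at (hl_br F X) (hl_alpha F \o Y)) o0) //.
rewrite (bigD1 i) //= big1 ?addr0; last exact: termZ.
by rewrite /X set_at_eq comp_set_at set_at_set_at yE => <-.
Qed.

Lemma derived_add_kernel (F K : hleib R n) (rho : F -> K) :
  is_extension rho -> perfect K -> forall u : F, exists2 t, derived t & rho (u - t) = 0.
Proof.
move=> [rho_hom rho_onto] Kperf u.
have [g gK] := choice (fun (k : K) (f : F) => rho f = k) rho_onto.
have [s rho_u] := Kperf (rho u).
exists (\sum_(p <- s) p.1 *: hl_br F (g \o p.2)).
  by exists [seq (p.1, g \o p.2) | p <- s]; rewrite big_map.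
rewrite (homB rho_hom) (hom_sum rho_hom s (fun q => hl_br F (g \o q))) rho_u; apply/eqP; rewrite subr_eq0; apply/eqP.
apply: eq_bigr => p _; case: rho_hom => _ -> _; congr (_ *: hl_br K _).
by apply: functional_extensionality => k /=; rewrite gK.
Qed.

Hypothesis n_gt1 : (1 < n)%N.

Lemma exists_neq (i : 'I_n) : exists j : 'I_n, j != i.
Proof.
have [->|ne] := eqVneq i (Ordinal (ltnW n_gt1)); last by exists (Ordinal (ltnW n_gt1)); rewrite eq_sym.
by exists (Ordinal n_gt1); apply/eqP => /(congr1 val).
Qed.

Lemma central_ext_alpha_central (A B : hleib R n) (p : A -> B) :
  is_central_ext p -> is_alpha_central_ext p.
Proof.
move=> [[p_hom p_onto] pZ]; split=> // x i xP; have [j ji] := exists_neq i.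
apply: (br_center_at (i := j)); have [m [pm0 ->]] := xP j ji; apply: pZ.
by case: p_hom => _ _ ->; rewrite pm0 alpha0.
Qed.

Lemma comp_central_alpha_central (F K L : hleib R n) (pi : K -> L) (rho : F -> K) :
  is_central_ext pi -> is_central_ext rho -> perfect K -> is_alpha_central_ext (pi \o rho).
Proof.
move=> [[pi_hom pi_onto] piZ] [rho_ext rhoZ] Kperf; have [rho_hom rho_onto] := rho_ext.
split.
  split; first exact: hom_comp.
  by move=> l; have [k <-] := pi_onto l; have [f <-] := rho_onto k; exists f.
move=> x i xP.
have xP' j : exists f, j != i -> pi (rho f) = 0 /\ x j = hl_alpha F f.
  have [->|ji] := eqVneq j i; first by exists 0 => /eqP.
  by have [f fP] := xP j ji; exists f.
have [m mP] := choice _ xP'.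
have xE : x = set_at (hl_alpha F \o m) i (x i).
  apply: functional_extensionality => j; have [->|ji] := eqVneq j i.
    by rewrite set_at_eq.
  by rewrite set_at_neq //; have [_ ->] := mP j ji.
have [j ji] := exists_neq i.
have [t dt rho_t] := derived_add_kernel rho_ext Kperf (x i).
rewrite xE -(subrK t (x i)) br_setD (rhoZ _ rho_t) add0r.
apply: br_set_derived dt => y.
apply: (br_alpha_kernel_br _ rho_hom rhoZ ji) => k ki.
by apply: piZ; have [] := mP k ki.
Qed.

Lemma universal_hom_eq_id (K L : hleib R n) (pi : K -> L) (f : K -> K) :
  is_universal_alpha_central pi -> is_hom f -> (forall k, pi (f k) = pi k) ->
  forall k, f k = k.
Proof.
move=> [pic univ] f_hom f_lift.
exact: (univ K pi (central_ext_alpha_central pic)).2 _ _ f_hom (hom_id K) f_lift (fun=> erefl).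
Qed.

Lemma universal_perfect (K L : hleib R n) (pi : K -> L) :
  is_universal_alpha_central pi -> perfect K.
Proof.
move=> [[[pi_hom _] _] univ] z.
pose P := prod_hleib L (abelianization_hleib K).
have fst_ac : is_alpha_central_ext (fst : P -> L).
  by apply/central_ext_alpha_central/fst_central_ext.
have := (univ P fst fst_ac).2 _ _
  (hom_pair pi_hom (hom_zero K (abelianization_hleib K) (ltnW n_gt1)))
  (hom_pair pi_hom (ab_proj_hom K)) (fun=> erefl) (fun=> erefl) z.
by move/(congr1 snd)/esym/ab_proj_eq0.
Qed.

End AlphaCentral.

Theorem theorem3p11 (R : fieldType) (n : nat) (hn : (2 <= n)%N)
  (K L : hleib R n) (pi : K -> L) :
  is_universal_alpha_central pi ->
  perfect K /\
  (forall (F : hleib R n) (rho : F -> K), is_central_ext rho ->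
     exists sigma : K -> F, is_hom sigma /\ forall k : K, rho (sigma k) = k).
Proof.
move=> univ; have Kperf := universal_perfect hn univ.
split=> // F rho rhoc.
have [[sigma [sigma_hom sigma_lift]] _] :=
  univ.2 F _ (comp_central_alpha_central hn univ.1 rhoc Kperf).
exists sigma; split=> //.
exact: universal_hom_eq_id univ (hom_comp sigma_hom rhoc.1.1) sigma_lift.
Qed.
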